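(* Let $\{W_t\}_{t\ge0}$ be a standard Brownian motion, let $\{\rho_s\}_{s\ge0}$ be an initial term-structure density ($\rho_s=-\partial_sP_{0s}>0$, $\int_0^\infty\rho_s\,\mathrm ds=1$), and let $\{\phi_s\}_{s\ge0}$ be a deterministic function (the functional model parameter). Consider the Flesaker–Hughston model based on the GBM family $M_{ts}=\exp(\phi_sW_t-\tfrac12\phi_s^2t)$, with bond prices $$P_{tT}=\frac{\int_T^\infty\rho_s\exp(\phi_sW_t-\frac12\phi_s^2t)\,\mathrm ds}{\int_t^\infty\rho_s\exp(\phi_sW_t-\frac12\phi_s^2t)\,\mathrm ds}.$$ Define $$\Phi_{tT}=\frac{\int_T^\infty\phi_s\rho_s\exp(\phi_sW_t-\frac12\phi_s^2t)\,\mathrm ds}{\int_T^\infty\rho_s\exp(\phi_sW_t-\frac12\phi_s^2t)\,\mathrm ds},\qquad \Phi_{tt}=\lim_{s\to t}\Phi_{st},$$ the bond volatility $\Omega_{tT}=\Phi_{tT}-\Phi_{tt}$, the market price of risk $\lambda_t=-\Phi_{tt}$, and the risk premium $\lambda_t\Omega_{tT}=\Phi_{tt}(\Phi_{tt}-\Phi_{tT})$. If either $\{\phi_t\}$ is positive and decreasing, or $\{\phi_t\}$ is negative and increasing, then the risk premium $\lambda_t\Omega_{tT}$ is positive (for $0<t<T$). *)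

From HB Require Import structures.
From mathcomp Require Import all_boot all_order all_algebra.
From mathcomp Require Import all_classical all_reals all_analysis.
Set Implicit Arguments. Unset Strict Implicit. Unset Printing Implicit Defensive.
Import Order.TTheory GRing.Theory Num.Theory.
Import numFieldNormedType.Exports.
Local Open Scope classical_set_scope.
Local Open Scope ring_scope.

Section FH.
Variable R : realType.

(* GBM family M_{ts} = exp(phi_s W_t - phi_s^2 t / 2), with w = W_t *)
Definition Mgbm (phi : R -> R) (t w s : R) : R :=
  expR (phi s * w - phi s ^+ 2 * t / 2).

Definition denFH (rho phi : R -> R) (t w T : R) : R :=
  Rintegral (@lebesgue_measure R) `[T, +oo[%classic
    (fun s => rho s * Mgbm phi t w s).

Definition numFH (rho phi : R -> R) (t w T : R) : R :=
  Rintegral (@lebesgue_measure R) `[T, +oo[%classic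
    (fun s => phi s * rho s * Mgbm phi t w s).

Definition bondP (rho phi : R -> R) (t w T : R) : R :=
  denFH rho phi t w T / denFH rho phi t w t.

Definition PhiFH (rho phi : R -> R) (t w T : R) : R :=
  numFH rho phi t w T / denFH rho phi t w T.

Definition OmegaFH (rho phi : R -> R) (t w T : R) : R :=
  PhiFH rho phi t w T - PhiFH rho phi t w t.

Definition lambdaFH (rho phi : R -> R) (t w : R) : R :=
  - PhiFH rho phi t w t.

End FH.

(* [Phi_tT] is the average of [phi] over [[T, oo)] with respect to the
   positive weight [rho_s M_ts], and [Phi_tt] the average over [[t, oo)].
   When [phi] is positive and decreasing, the first average is at most [phi_T]
   while the average over [[t, T)] exceeds [phi_T]; the average over [[t, oo)]
   is the mediant of these two, so [Phi_tT < Phi_tt], and [Phi_tt > 0].  Hence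
   [lambda_t Omega_tT = Phi_tt (Phi_tt - Phi_tT) > 0].  The negative increasing
   case reduces to this one: replacing [phi] by [-phi] and [W_t] by [-W_t]
   leaves [M] unchanged and flips the sign of every [Phi], so the risk premium
   is unchanged. *)

From HB Require Import structures.
From mathcomp Require Import all_boot all_order all_algebra.
From mathcomp Require Import all_classical all_reals all_analysis.
From mathcomp Require Import measurable_realfun ring lra.
Import Order.TTheory GRing.Theory Num.Theory.
Import numFieldNormedType.Exports.
Local Open Scope classical_set_scope.
Local Open Scope ring_scope.

Lemma fineB_opp (R : numDomainType) (a b : \bar R) :
  fine (a - b)%E = - fine (b - a)%E.
Proof. by case: a b => [a| |] [b| |] //=; rewrite ?oppr0 // opprB. Qed.

Lemma mediant_lt (R : realFieldType) (a b c d : R) : 0 < b -> 0 < d ->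
  a / b < c / d -> a / b < (a + c) / (b + d).
Proof.
move=> b0 d0; set x := a / b; set y := c / d => xy.
have -> : a = x * b by rewrite divfK ?gt_eqF.
have -> : c = y * d by rewrite divfK ?gt_eqF.
rewrite ltr_pdivlMr ?addr_gt0 //; nra.
Qed.

Section integral_facts.
Context {R : realType}.
Notation mu := (@lebesgue_measure R).
Implicit Types (D : set (measurableTypeR R)) (f h : R -> R).

(* No integrability is needed: [fine] sends both infinities to [0]. *)
Lemma RintegralN D f : \int[mu]_(x in D) - f x = - \int[mu]_(x in D) f x.
Proof.
rewrite /Rintegral (_ : (fun x => (- f x)%:E) = \- (EFin \o f))%E //.
rewrite (integralE _ _ (\- _)%E) funeposN funenegN.
by rewrite [in RHS]integralE fineB_opp.
Qed.

Lemma Rintegral_gt0 D f : measurable D -> (mu D != 0)%E ->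
  mu.-integrable D (EFin \o f) -> (forall x, D x -> 0 < f x) ->
  0 < \int[mu]_(x in D) f x.
Proof.
move=> mD D0 intf fpos.
rewrite lt_def Rintegral_ge0 ?andbT; last by move=> x /fpos/ltW.
apply/negP => /eqP I0.
have fin := integrable_fin_num mD intf.
have : (\int[mu]_(x in D) `|(EFin \o f) x| = 0)%E.
  transitivity (\int[mu]_(x in D) (EFin \o f) x)%E.
    apply: eq_integral => x /[!inE] Dx /=.
    by rewrite ger0_norm // ltW // fpos.
  by rewrite -(fineK fin); move: I0; rewrite /Rintegral => ->.
move/(ae_eq_integral_abs _ mD (measurable_int _ intf)) => [N [mN N0 sub]].
move/eqP: D0; apply; apply: (subset_measure0 _ _ _ N0) => // x Dx.
by apply: sub => /(_ Dx) /= [] fx0; move: (fpos x Dx); rewrite fx0 ltxx.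
Qed.

Lemma integrableM_bounded {D f h} {C : R} : measurable D ->
  mu.-integrable D (EFin \o f) -> measurable_fun D h ->
  (forall x, D x -> `|h x| <= C) -> mu.-integrable D (EFin \o (f \* h)).
Proof.
move=> mD intf mh hC.
have hbd : [bounded h x | x in D].
  rewrite /bounded_near; near=> M => x Dx /=.
  by rewrite (le_trans (hC x Dx)) //; near: M;
    apply: nbhs_pinfty_ge; exact: num_real.
apply: (eq_integrable mD _ _ _ (integrableMl mD intf mh hbd)) => x _.
by rewrite /= EFinM.
Unshelve. all: by end_near.
Qed.

Lemma Rintegral_itv_split f {a b : R} : a < b ->
  mu.-integrable `[a, +oo[%classic (EFin \o f) ->
  \int[mu]_(x in `[a, +oo[%classic) f x =
  \int[mu]_(x in `[a, b[%classic) f x + \int[mu]_(x in `[b, +oo[%classic) f x.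
Proof.
move=> ab intf.
have E : (`[a, +oo[%classic : set R) = `[a, b[%classic `|` `[b, +oo[%classic.
  apply/seteqP; split => x /=; rewrite !in_itv /= ?andbT.
    by move=> ax; case: (ltP x b) => xb; [left; rewrite ax | right].
  by case=> [/andP[] //|bx]; exact: le_trans (ltW ab) bx.
rewrite E Rintegral_setU // -?E //.
apply/disj_set2P; apply/seteqP; split => x //=.
rewrite !in_itv /= andbT => -[/andP[_ xb] bx].
by move: (lt_le_trans xb bx); rewrite ltxx.
Qed.

Lemma Rintegral_mul_le_cst D f g (c : R) : measurable D ->
  mu.-integrable D (EFin \o g) -> mu.-integrable D (EFin \o (f \* g)) ->
  (forall x, D x -> 0 <= g x) -> (forall x, D x -> f x <= c) ->
  \int[mu]_(x in D) (f \* g) x <= c * \int[mu]_(x in D) g x.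
Proof.
move=> mD intg intfg g0 fc; rewrite -RintegralZl //.
apply: le_Rintegral => //.
  exact: (eq_integrable mD _ _ _ (integrableZl mD c intg)).
by move=> x Dx; rewrite ler_wpM2r ?g0 ?fc.
Qed.

Lemma Rintegral_mul_gt_cst D f g (c : R) : measurable D -> (mu D != 0)%E ->
  mu.-integrable D (EFin \o g) -> mu.-integrable D (EFin \o (f \* g)) ->
  (forall x, D x -> 0 < g x) -> (forall x, D x -> c < f x) ->
  c * \int[mu]_(x in D) g x < \int[mu]_(x in D) (f \* g) x.
Proof.
move=> mD D0 intg intfg g0 cf.
have intcg : mu.-integrable D (EFin \o (fun x => c * g x)).
  exact: (eq_integrable mD _ _ _ (integrableZl mD c intg)).
rewrite -subr_gt0 -RintegralZl // -RintegralB //.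
apply: Rintegral_gt0 => //.
  exact: (eq_integrable mD _ _ _ (integrableB mD intfg intcg)).
by move=> x Dx; rewrite -mulrBl mulr_gt0 ?subr_gt0 ?g0 ?cf.
Qed.

Lemma lebesgue_measure_itvco_neq0 {a b : R} : a < b ->
  (mu `[a, b[%classic != 0)%E.
Proof.
move=> ab; rewrite lebesgue_measure_itv /= lte_fin ab.
by rewrite -EFinD eqe subr_eq0 gt_eqF.
Qed.

Lemma lebesgue_measure_itvcy_neq0 (a : R) : (mu `[a, +oo[%classic != 0)%E.
Proof. by rewrite lebesgue_measure_itv /= ltry. Qed.

Lemma measurable_fun_nonincreasing {f} {a : R} :
  (forall x y, a <= x -> x <= y -> f y <= f x) ->
  measurable_fun `[a, +oo[%classic f.
Proof.
move=> f_ni.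
apply: (eq_measurable_fun (f \o (fun x => Num.max x a))).
  by move=> x /[!inE] /=; rewrite in_itv andbT => ax /=; rewrite max_l.
apply: nonincreasing_measurable => // x y xy /=.
by apply: f_ni; [rewrite le_max lexx orbT | exact: le_max2].
Qed.

End integral_facts.

Section flesaker_hughston.
Context {R : realType}.
Notation mu := (@lebesgue_measure R).
Implicit Types (rho phi : R -> R) (t w s T : R).

Lemma Mgbm_gt0 phi t w s : 0 < Mgbm phi t w s.
Proof. exact: expR_gt0. Qed.

Lemma Mgbm_le_expR phi t w s : 0 < t -> Mgbm phi t w s <= expR (w ^+ 2 / (2 * t)).
Proof.
move=> t0; rewrite ler_expR -subr_ge0.
have -> : w ^+ 2 / (2 * t) - (phi s * w - phi s ^+ 2 * t / 2) =
    (phi s * t - w) ^+ 2 / (2 * t) by field; rewrite gt_eqF.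
by rewrite divr_ge0 ?sqr_ge0 ?mulr_ge0 ?ltW.
Qed.

Lemma measurable_Mgbm {D : set (measurableTypeR R)} phi t w :
  measurable D -> measurable_fun D phi -> measurable_fun D (Mgbm phi t w).
Proof.
move=> mD mphi; apply: measurableT_comp => //.
apply: measurable_funB; first exact: measurable_funM.
apply: measurable_funM => //; apply: measurable_funM => //.
exact: measurable_funX.
Qed.

Lemma Mgbm_opp phi t w : Mgbm (fun s => - phi s) t (- w) = Mgbm phi t w.
Proof. by apply/funext => s; rewrite /Mgbm mulrNN sqrrN. Qed.

Lemma denFH_opp rho phi t w T :
  denFH rho (fun s => - phi s) t (- w) T = denFH rho phi t w T.
Proof. by rewrite /denFH Mgbm_opp. Qed.

Lemma numFH_opp rho phi t w T :
  numFH rho (fun s => - phi s) t (- w) T = - numFH rho phi t w T.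
Proof.
rewrite /numFH Mgbm_opp -RintegralN.
by apply: eq_Rintegral => s _; rewrite !mulNr.
Qed.

Lemma PhiFH_opp rho phi t w T :
  PhiFH rho (fun s => - phi s) t (- w) T = - PhiFH rho phi t w T.
Proof. by rewrite /PhiFH numFH_opp denFH_opp mulNr. Qed.

Lemma risk_premium_opp rho phi t w T :
  lambdaFH rho (fun s => - phi s) t (- w) *
    OmegaFH rho (fun s => - phi s) t (- w) T =
  lambdaFH rho phi t w * OmegaFH rho phi t w T.
Proof. by rewrite /lambdaFH /OmegaFH !PhiFH_opp -opprD mulrNN. Qed.

End flesaker_hughston.

Section positive_decreasing.
Context {R : realType}.
Notation mu := (@lebesgue_measure R).
Variables (rho phi : R -> R) (t w : R).
Hypotheses (rho_pos : forall s, 0 <= s -> 0 < rho s)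
  (rho_int : mu.-integrable `[0, +oo[%classic (fun s => (rho s)%:E))
  (phi_pos : forall s, 0 <= s -> 0 < phi s)
  (phi_dec : forall s u, 0 <= s -> s < u -> phi u < phi s)
  (t_gt0 : 0 < t).

Let weight s := rho s * Mgbm phi t w s.

Local Notation Rge0 := (`[0, +oo[%classic : set (measurableTypeR R)).

Let phi_le s u : 0 <= s -> s <= u -> phi u <= phi s.
Proof.
move=> s0; rewrite le_eqVlt => /predU1P[-> //|su].
exact/ltW/phi_dec.
Qed.

Let weight_gt0 s : Rge0 s -> 0 < weight s.
Proof.
by rewrite /= in_itv /= andbT => s0; rewrite mulr_gt0 ?rho_pos ?Mgbm_gt0.
Qed.

Let integrable_weight_Rge0 :
  mu.-integrable Rge0 (EFin \o weight) /\
  mu.-integrable Rge0 (EFin \o (phi \* weight)).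
Proof.
have mphi : measurable_fun Rge0 phi := measurable_fun_nonincreasing phi_le.
have mM := measurable_Mgbm phi t w (measurable_itv _) mphi.
have M_le s : `|Mgbm phi t w s| <= expR (w ^+ 2 / (2 * t)).
  by rewrite gtr0_norm ?Mgbm_gt0 ?Mgbm_le_expR.
split.
  exact: integrableM_bounded (measurable_itv _) rho_int mM (fun s _ => M_le s).
have phiM_le s : Rge0 s ->
    `|phi s * Mgbm phi t w s| <= phi 0 * expR (w ^+ 2 / (2 * t)).
  rewrite /= in_itv /= andbT => s0.
  rewrite normrM (gtr0_norm (phi_pos _ s0)) gtr0_norm ?Mgbm_gt0 //.
  apply: ler_pM; [exact/ltW/phi_pos | exact/ltW/Mgbm_gt0 | exact: phi_le |].
  exact: Mgbm_le_expR.
have mphiM : measurable_fun Rge0 (phi \* Mgbm phi t w) by exact: measurable_funM.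
have := integrableM_bounded (measurable_itv _) rho_int mphiM phiM_le.
by apply: eq_integrable => // s _ /=; rewrite mulrCA.
Qed.

Let integrable_weight {D : set (measurableTypeR R)} :
  measurable D -> D `<=` Rge0 ->
  mu.-integrable D (EFin \o weight).
Proof. by move=> mD DR; exact: integrableS _ mD DR integrable_weight_Rge0.1. Qed.

Let integrable_phi_weight {D : set (measurableTypeR R)} :
  measurable D -> D `<=` Rge0 ->
  mu.-integrable D (EFin \o (phi \* weight)).
Proof. by move=> mD DR; exact: integrableS _ mD DR integrable_weight_Rge0.2. Qed.

Let itv_sub_Rge0 a (b : itv_bound R) : 0 <= a ->
  [set` Interval (BLeft a) b] `<=` Rge0.
Proof.
move=> a0 x /=; rewrite !in_itv /= andbT => /andP[ax _].
exact: le_trans ax.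
Qed.

Let numFHE T : numFH rho phi t w T = \int[mu]_(s in `[T, +oo[) (phi \* weight) s.
Proof. by apply: eq_Rintegral => s _; rewrite /= mulrA. Qed.

Let Rintegral_weight_gt0 {D : set (measurableTypeR R)} : measurable D ->
  (mu D != 0)%E -> D `<=` Rge0 -> 0 < \int[mu]_(s in D) weight s.
Proof.
move=> mD D0 DR; apply: Rintegral_gt0 => //; first exact: integrable_weight.
by move=> s /DR; exact: weight_gt0.
Qed.

Let Rintegral_phi_weight_gt0 {D : set (measurableTypeR R)} : measurable D ->
  (mu D != 0)%E -> D `<=` Rge0 -> 0 < \int[mu]_(s in D) (phi \* weight) s.
Proof.
move=> mD D0 DR; apply: Rintegral_gt0 => //; first exact: integrable_phi_weight.
move=> s /DR Ds; rewrite /= mulr_gt0 ?weight_gt0 //.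
by apply: phi_pos; move: Ds; rewrite /= in_itv /= andbT.
Qed.

Lemma PhiFH_gt0 : 0 < PhiFH rho phi t w t.
Proof.
have Rge0_t : `[t, +oo[%classic `<=` Rge0 := itv_sub_Rge0 _ _ (ltW t_gt0).
rewrite /PhiFH numFHE divr_gt0 ?Rintegral_phi_weight_gt0 //.
  exact: lebesgue_measure_itvcy_neq0.
by rewrite Rintegral_weight_gt0 // lebesgue_measure_itvcy_neq0.
Qed.

Lemma PhiFH_lt (T : R) : t < T -> PhiFH rho phi t w T < PhiFH rho phi t w t.
Proof.
move=> tT; have t0 := ltW t_gt0; have T0 := le_trans t0 (ltW tT).
have sub_t : `[t, +oo[%classic `<=` Rge0 := itv_sub_Rge0 _ _ t0.
have sub_T : `[T, +oo[%classic `<=` Rge0 := itv_sub_Rge0 _ _ T0.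
have sub_tT : `[t, T[%classic `<=` Rge0 := itv_sub_Rge0 _ _ t0.
have den_tail_gt0 :=
  Rintegral_weight_gt0 (measurable_itv _) (lebesgue_measure_itvcy_neq0 T) sub_T.
have den_head_gt0 :=
  Rintegral_weight_gt0 (measurable_itv _) (lebesgue_measure_itvco_neq0 tT) sub_tT.
have num_tail_le : \int[mu]_(s in `[T, +oo[) (phi \* weight) s <=
    phi T * \int[mu]_(s in `[T, +oo[) weight s.
  apply: Rintegral_mul_le_cst => //.
  - exact: integrable_weight.
  - exact: integrable_phi_weight.
  - by move=> s /sub_T /weight_gt0 /ltW.
  - by move=> s; rewrite /= in_itv /= andbT; exact: phi_le.
have num_head_gt : phi T * \int[mu]_(s in `[t, T[) weight s <
    \int[mu]_(s in `[t, T[) (phi \* weight) s.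
  apply: Rintegral_mul_gt_cst => //.
  - exact: lebesgue_measure_itvco_neq0.
  - exact: integrable_weight.
  - exact: integrable_phi_weight.
  - by move=> s /sub_tT /weight_gt0.
  - move=> s; rewrite /= in_itv /= => /andP[ts sT].
    exact: phi_dec (le_trans t0 ts) sT.
rewrite /PhiFH !numFHE /denFH -/weight.
rewrite (Rintegral_itv_split _ tT (integrable_weight (measurable_itv _) sub_t)).
rewrite (Rintegral_itv_split _ tT
  (integrable_phi_weight (measurable_itv _) sub_t)).
rewrite [X in _ < _ / X]addrC [X in _ < X / _]addrC mediant_lt //.
apply: (@le_lt_trans _ _ (phi T)); first by rewrite ler_pdivrMr.
by rewrite ltr_pdivlMr.
Qed.

Lemma risk_premium_gt0_decreasing (T : R) : t < T ->
  0 < lambdaFH rho phi t w * OmegaFH rho phi t w T.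
Proof.
move=> tT; rewrite /lambdaFH /OmegaFH mulNr -mulrN opprB.
by rewrite mulr_gt0 ?PhiFH_gt0 // subr_gt0 PhiFH_lt.
Qed.

End positive_decreasing.

Theorem proposition2 (R : realType) (Omega : Type) (W : R -> Omega -> R)
  (rho phi : R -> R)
  (rho_pos : forall s, 0 <= s -> 0 < rho s)
  (rho_int : (@lebesgue_measure R).-integrable `[0, +oo[%classic
               (fun s => (rho s)%:E))
  (rho_tot : Rintegral (@lebesgue_measure R) `[0, +oo[%classic rho = 1)
  (phi_mon :
     ((forall s, 0 <= s -> 0 < phi s) /\
      (forall s u, 0 <= s -> s < u -> phi u < phi s))
     \/
     ((forall s, 0 <= s -> phi s < 0) /\
      (forall s u, 0 <= s -> s < u -> phi s < phi u)))
  (t T : R) (ht : 0 < t) (htT : t < T) (omega : Omega) :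
  0 < lambdaFH rho phi t (W t omega) * OmegaFH rho phi t (W t omega) T.
Proof.
case: phi_mon => [[phi_pos phi_dec]|[phi_neg phi_inc]].
  exact: risk_premium_gt0_decreasing.
rewrite -risk_premium_opp; apply: risk_premium_gt0_decreasing => //.
- by move=> s /phi_neg; rewrite oppr_gt0.
- by move=> s u s0 su; rewrite ltrN2 phi_inc.
Qed.
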